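(* Suppose that for $m=0$ and all $\mu\in\mathcal{P}(\overline{\mathbb{Z}})$, $$-I(\mu)\le\lim_{\varepsilon\to0^+}\liminf_{n\to\infty}\frac1n\log\mathbb{P}_m\big(\ell_n\in B(\mu,\varepsilon)\big)\quad\text{and}\quad\lim_{\varepsilon\to0^+}\limsup_{n\to\infty}\frac1n\log\mathbb{P}_m\big(\ell_n\in B(\mu,\varepsilon)\big)\le-I(\mu).$$ Then these two inequalities hold for all $m\in\mathbb{Z}$ and all $\mu\in\mathcal{P}(\overline{\mathbb{Z}})$.
   Context: $\overline{\mathbb{Z}}=\mathbb{Z}\cup\{-\infty,+\infty\}$ is the two-point compactification of $\mathbb{Z}$. Let $p:\mathbb{Z}\to[0,1]$ with $0<p(k)<1$ for all $k$ and limits $p_\pm=\lim_{k\to\pm\infty}p(k)\in(0,1)$. Under $\mathbb{P}_m$, $(S_n)_{n\ge1}$ is the Markov chain on $\overline{\mathbb{Z}}$ with $S_1=m$, $\pm\infty$ absorbing, $k\to k+1$ w.p. $p(k)$ and $k\to k-1$ w.p. $1-p(k)$ for $k\in\mathbb{Z}$; $\ell_n=\frac1n\sum_{j=1}^n\delta_{S_j}$. Metric on $\overline{\mathbb{Z}}$: $d(h,k)=|\varphi(h)-\varphi(k)|$ with $\varphi(\pm\infty)=\pm1$, $\varphi(k)=1-2^{-k}$ for $k\ge0$, $\varphi(k)=-1+2^{-|k|}$ for $k<0$. $\|\nu\|=\sup\{\int f\,d\nu: f\text{ 1-Lipschitz for }d,\ \sup|f|\le1\}$ and $B(\mu,\varepsilon)=\{\nu\in\mathcal{P}(\overline{\mathbb{Z}}):\|\nu-\mu\|<\varepsilon\}$.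 For $\mu=\alpha_-\delta_{-\infty}+\alpha_0\mu_0+\alpha_+\delta_{+\infty}$ ($\alpha_\sigma\ge0$ summing to 1, $\mu_0\in\mathcal{P}(\mathbb{Z})$), with $0\cdot\infty=0$: $I(\mu)=\alpha_0 I_{\mathrm{DV}}(\mu_0)+\min\{\alpha_- I^{p_-}_{\mathrm{Cr}}(0)+\alpha_+\inf_{x\in[0,1]}I^{p_+}_{\mathrm{Cr}}(x)\,;\,\alpha_+ I^{p_+}_{\mathrm{Cr}}(0)+\alpha_-\inf_{x\in[-1,0]}I^{p_-}_{\mathrm{Cr}}(x)\}$, where $I_{\mathrm{DV}}(\nu)=\sup_{u_k\ge1}\sum_{k}\nu(k)\log\frac{u_k}{p(k)u_{k+1}+(1-p(k))u_{k-1}}$ and $I^q_{\mathrm{Cr}}(x)=\frac{1-x}{2}\log\frac{1-x}{2(1-q)}+\frac{1+x}{2}\log\frac{1+x}{2q}$ on $[-1,1]$, $+\infty$ elsewhere. *)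

From HB Require Import structures.
From mathcomp Require Import all_boot all_order all_algebra.
From mathcomp Require Import all_classical all_reals all_analysis.
Set Implicit Arguments. Unset Strict Implicit. Unset Printing Implicit Defensive.
Import Order.TTheory GRing.Theory Num.Theory.
Import numFieldNormedType.Exports.
Local Open Scope classical_set_scope.
Local Open Scope ring_scope.

Inductive zbar := ZNinf | ZFin of int | ZPinf.

Section Defs.
Variable R : realType.

Definition phiZ (h : zbar) : R :=
  match h with
  | ZNinf => -1
  | ZPinf => 1
  | ZFin k => match k with
              | Posz n => 1 - (2 ^- n)
              | Negz n => -1 + (2 ^- n.+1)
              end
  end.

Definition dZ (h k : zbar) : R := `| phiZ h - phiZ k |.

(* Sum over Z of g, as the limit of the partial sums over [-N, N). *)
Definition zpartial (g : int -> R) (N : nat) : R :=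
  \sum_(i < N) (g (Posz i) + g (Negz i)).
Definition zsum (g : int -> R) : R := limn (zpartial g).

Definition is_prob (w : zbar -> R) : Prop :=
  (forall x, 0 <= w x) /\
  zpartial (fun k => w (ZFin k)) @ \oo --> 1 - w ZNinf - w ZPinf.

Definition zint (w : zbar -> R) (f : zbar -> R) : R :=
  w ZNinf * f ZNinf + w ZPinf * f ZPinf + zsum (fun k => w (ZFin k) * f (ZFin k)).

Definition lip1 (f : zbar -> R) : Prop :=
  (forall h k, `| f h - f k | <= dZ h k) /\ (forall x, `| f x | <= 1).

Definition zdist (nu mu : zbar -> R) : R :=
  sup [set zint nu f - zint mu f | f in lip1].

Definition in_ball (mu : zbar -> R) (eps : R) (nu : zbar -> R) : Prop :=
  zdist nu mu < eps.

(* The chain started at S_1 = m up to time n: steps s_1..s_{n-1} (true = +1).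
   Position S_{j+1} (j : 'I_n) after the first j steps. *)
Definition chain_pos (m : int) (n : nat) (s : {ffun 'I_n.-1 -> bool}) (j : nat) : int :=
  m + \sum_(i < n.-1 | (i < j)%N) (if s i then 1 else -1).

Definition path_prob (p : int -> R) (m : int) (n : nat) (s : {ffun 'I_n.-1 -> bool}) : R :=
  \prod_(i < n.-1) (if s i then p (chain_pos m s i) else 1 - p (chain_pos m s i)).

(* empirical measure ell_n = (1/n) sum_{j=1}^n delta_{S_j} (the chain started in Z
   never reaches +-oo in finite time) *)
Definition emp (m : int) (n : nat) (s : {ffun 'I_n.-1 -> bool}) (x : zbar) : R :=
  match x with
  | ZFin k => n%:R^-1 * #|[set j : 'I_n | chain_pos m s j == k]|%:R
  | _ => 0
  end.

Definition prob_ball (p : int -> R) (m : int) (mu : zbar -> R) (eps : R) (n : nat) : R :=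
  \sum_(s : {ffun 'I_n.-1 -> bool})
     (if `[< in_ball mu eps (emp m s) >] then path_prob p m s else 0).

Definition lograte (P : R) (n : nat) : \bar R :=
  if 0 < P then ((n%:R)^-1 * ln P)%:E else -oo%E.

Definition lower_bd (p : int -> R) (m : int) (mu : zbar -> R) : \bar R :=
  lim ((fun eps => limn_einf (fun n => lograte (prob_ball p m mu eps n) n)) @ 0^'+).
Definition upper_bd (p : int -> R) (m : int) (mu : zbar -> R) : \bar R :=
  lim ((fun eps => limn_esup (fun n => lograte (prob_ball p m mu eps n) n)) @ 0^'+).

Definition xlogy (a b : R) : R := if a == 0 then 0 else a * ln (a / b).

Definition I_Cr (q x : R) : \bar R :=
  if (-1 <= x <= 1) then
    (xlogy ((1 - x) / 2) (1 - q) + xlogy ((1 + x) / 2) q)%:E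
  else +oo%E.

Definition DV_term (p : int -> R) (nu : int -> R) (u : int -> R) (k : int) : R :=
  nu k * ln (u k / (p k * u (k + 1) + (1 - p k) * u (k - 1))).
Definition DV_sum (p : int -> R) (nu : int -> R) (u : int -> R) : \bar R :=
  ((\esum_(k in [set: int]) (Num.max (DV_term p nu u k) 0)%:E)
   - (\esum_(k in [set: int]) (Num.max (- DV_term p nu u k) 0)%:E))%E.
Definition I_DV (p : int -> R) (nu : int -> R) : \bar R :=
  ereal_sup [set DV_sum p nu u | u in [set u : int -> R | forall k, 1 <= u k]].

Definition rateI (p : int -> R) (pm pp : R) (w : zbar -> R) : \bar R :=
  let am := w ZNinf in
  let ap := w ZPinf in
  let a0 := 1 - am - ap in
  ((a0%:E * I_DV p (fun k => (w (ZFin k) / a0)%R)) +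
   Order.min (am%:E * I_Cr pm 0 + ap%:E * ereal_inf [set I_Cr pp x | x in `[0%R, 1%R]])
             (ap%:E * I_Cr pp 0 + am%:E * ereal_inf [set I_Cr pm x | x in `[(-1)%R, 0%R]]))%E.

End Defs.

(* Prepending one step x -> x +- 1 to a path of length n + 1 started at x +- 1 gives a path of
   length n + 2 started at x: its probability gets multiplied by the fixed factor
   q = p x or 1 - p x > 0, and its empirical measure moves by at most 2 / (n + 2) in ||.||.
   Hence
     P_x(l_{n+2} in B(mu, eps + 2/(n+2))) >= q * P_{x+-1}(l_{n+1} in B(mu, eps)).
   Since (1/n) log q -> 0, letting n -> oo and then eps -> 0 shows that both the liminf and the
   limsup bounds at x +- 1 are at most those at x, so they do not depend on the starting point.
   Neither the form of the rate function nor the limits p_- and p_+ play any role. *)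

From HB Require Import structures.
From mathcomp Require Import all_boot all_order all_algebra.
From mathcomp Require Import all_classical all_reals all_analysis.
From mathcomp Require Import ring lra.
Set Implicit Arguments. Unset Strict Implicit. Unset Printing Implicit Defensive.
Import Order.TTheory GRing.Theory Num.Theory.
Import numFieldNormedType.Exports.
Local Open Scope classical_set_scope.
Local Open Scope ring_scope.

Lemma eq_succ_int_const (T : Type) (f : int -> T) :
  (forall m, f (m + 1) = f m) -> forall m, f m = f 0.
Proof.
move=> fS; elim/int_rect => [//|n IH|n IH].
  by rewrite -IH -[RHS]fS -PoszD addn1.
by rewrite -IH -[LHS]fS -addn1 PoszD opprD subrK.
Qed.

Section limn_esup_einf_compare.
Variable R : realType.
Implicit Types (u v : (\bar R)^nat).
Local Open Scope ereal_scope.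

Lemma le_limn_esup_near u v :
  (\forall n \near \oo, u n <= v n) -> limn_esup u <= limn_esup v.
Proof.
move=> uv; apply: le_ereal_inf_tmp => _ [V oV <-].
have oW : \oo (V `&` [set n | u n <= v n]) by apply: filterI.
apply: (@le_trans _ _ (ereal_sup (u @` (V `&` [set n | u n <= v n])))).
  by apply: ereal_inf_lbound; exists (V `&` [set n | u n <= v n]).
apply: ge_ereal_sup => _ [n [Vn uvn] <-].
by apply: le_trans uvn _; apply: ereal_sup_ubound; exists n.
Qed.

Lemma le_limn_einf_near u v :
  (\forall n \near \oo, u n <= v n) -> limn_einf u <= limn_einf v.
Proof.
move=> uv; rewrite leeN2; apply: le_limn_esup_near.
by apply: filterS uv => n; rewrite /= leeN2.
Qed.

Lemma limn_esupS u : limn_esup (fun n => u n.+1) = limn_esup u.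
Proof.
rewrite !limn_esup_lim; have -> : esups (fun n => u n.+1) = (fun n => esups u n.+1).
  apply/funext => n; rewrite /esups /=; congr ereal_sup.
  apply/seteqP; split => _ [k /= nk <-]; first by exists k.+1.
  by case: k nk => // k nk; exists k.
by apply: cvg_lim => //; rewrite cvg_shiftS; exact: is_cvg_esups.
Qed.

Lemma limn_einfS u : limn_einf (fun n => u n.+1) = limn_einf u.
Proof. by rewrite /limn_einf -[in RHS]limn_esupS. Qed.

Lemma limn_esupDl (c : R) u : limn_esup (fun n => c%:E + u n) = c%:E + limn_esup u.
Proof.
rewrite -[LHS]oppeK -limn_einfN -[in RHS](oppeK (limn_esup u)) -limn_einfN.
rewrite -[in RHS](oppeK c%:E) -oppeD // -limn_einf_shift //.
by congr (- limn_einf _); apply/funext => n /=; rewrite oppeD.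
Qed.

Lemma le_limn_esup_approxS u v :
  (forall d : R, (0 < d)%R -> \forall n \near \oo, u n <= d%:E + v n.+1) ->
  limn_esup u <= limn_esup v.
Proof.
move=> uv; rewrite -(limn_esupS v); apply/lee_addgt0Pr => d d0.
by rewrite addeC -limn_esupDl; exact: le_limn_esup_near (uv d d0).
Qed.

Lemma le_limn_einf_approxS u v :
  (forall d : R, (0 < d)%R -> \forall n \near \oo, u n <= d%:E + v n.+1) ->
  limn_einf u <= limn_einf v.
Proof.
move=> uv; rewrite -(limn_einfS v); apply/lee_addgt0Pr => d d0.
by rewrite addeC -limn_einf_shift //; exact: le_limn_einf_near (uv d d0).
Qed.

End limn_esup_einf_compare.

Section limits.
Variable R : realType.

Lemma near_divSn_le (c e : R) : 0 < e -> \forall k \near \oo, c / k.+1%:R <= e.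
Proof.
move=> e0; exists (Num.bound `|c / e|) => // k /= hk.
rewrite ler_pdivrMr ?ltr0n // mulrC -ler_pdivrMr //.
apply: le_trans (ler_norm _) _; apply/ltW/(lt_le_trans (archi_boundP (normr_ge0 _))).
by rewrite ler_nat (leq_trans hk).
Qed.

Lemma near_inftyS (P : nat -> Prop) :
  (\forall n \near \oo, P n.+1) -> \forall n \near \oo, P n.
Proof. by move=> [N _ PN]; exists N.+1 => // -[|n] // /PN. Qed.

Local Open Scope ereal_scope.

Lemma le_lim_at_right (a : R) (f g : R -> \bar R) :
  (forall x y, (a < x)%R -> (x <= y)%R -> f x <= f y) ->
  (forall x y, (a < x)%R -> (x <= y)%R -> g x <= g y) ->
  (forall x y, (a < x)%R -> (x < y)%R -> g x <= f y) ->
  lim (g x @[x --> a^'+]) <= lim (f x @[x --> a^'+]).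
Proof.
have limE (h : R -> \bar R) : (forall x y, (a < x)%R -> (x <= y)%R -> h x <= h y) ->
    lim (h x @[x --> a^'+]) = ereal_inf (h @` `]a, +oo[).
  move=> hnd; apply: cvg_lim => //; apply: nondecreasing_at_right_cvge => // x y.
  by rewrite !in_itv /= !andbT => ax _; exact: hnd.
move=> fnd gnd gf; rewrite (limE f fnd) (limE g gnd).
apply: le_ereal_inf_tmp => _ [y + <-]; rewrite /= in_itv /= andbT => ay.
apply: ge_ereal_inf; exists (g ((a + y) / 2)%R); have [am my] := midf_lt ay.
  by exists ((a + y) / 2)%R => //=; rewrite in_itv /= am.
exact: gf.
Qed.

End limits.

Section chain.
Variable R : realType.

Definition step (d : bool) : int := if d then 1 else -1.

Definition ffun_cons k (d : bool) (s : {ffun 'I_k -> bool}) : {ffun 'I_k.+1 -> bool} :=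
  [ffun i => if unlift ord0 i is Some j then s j else d].

Lemma ffun_cons0 k d (s : {ffun 'I_k -> bool}) : ffun_cons d s ord0 = d.
Proof. by rewrite ffunE unlift_none. Qed.

Lemma ffun_consS k d (s : {ffun 'I_k -> bool}) j : ffun_cons d s (lift ord0 j) = s j.
Proof. by rewrite ffunE liftK. Qed.

Lemma big_ffun_cons k (F : {ffun 'I_k.+1 -> bool} -> R) :
  \sum_(s : {ffun 'I_k.+1 -> bool}) F s =
  \sum_(d : bool) \sum_(s : {ffun 'I_k -> bool}) F (ffun_cons d s).
Proof.
rewrite pair_big /= (reindex (fun x => ffun_cons x.1 x.2)) //.
exists (fun s : {ffun 'I_k.+1 -> bool} => (s ord0, [ffun j => s (lift ord0 j)])).
  move=> [d s] _ /=; rewrite ffun_cons0; congr pair.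
  by apply/ffunP => j; rewrite ffunE ffun_consS.
move=> s _ /=.
by apply/ffunP => i; rewrite ffunE; case: unliftP => [j ->|->]; rewrite ?ffunE.
Qed.

Lemma chain_pos0 m n (s : {ffun 'I_n.-1 -> bool}) : chain_pos m s 0 = m.
Proof. by rewrite /chain_pos big1 ?addr0. Qed.

Lemma chain_pos_cons m k d (s : {ffun 'I_k -> bool}) j :
  @chain_pos m k.+2 (ffun_cons d s) j.+1 = @chain_pos (m + step d) k.+1 s j.
Proof.
rewrite /chain_pos /= big_mkcond big_ord_recl /= ffun_cons0 -addrA; congr (_ + _).
rewrite [in RHS]big_mkcond; congr (_ + _).
by apply: eq_bigr => i _; rewrite ffun_consS /bump leq0n add1n ltnS.
Qed.

Variable p : int -> R.
Hypothesis hp : forall k, 0 < p k < 1.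

Definition step_prob (x : int) (d : bool) : R := if d then p x else 1 - p x.

Lemma step_prob_gt0 x d : 0 < step_prob x d.
Proof. by have /andP[p0 p1] := hp x; case: d; rewrite /step_prob ?subr_gt0. Qed.

Lemma step_prob_le1 x d : step_prob x d <= 1.
Proof. by have /andP[p0 p1] := hp x; case: d; rewrite /step_prob ?gerBl ltW. Qed.

Lemma path_prob_cons m k d (s : {ffun 'I_k -> bool}) :
  @path_prob R p m k.+2 (ffun_cons d s) = step_prob m d * @path_prob R p (m + step d) k.+1 s.
Proof.
rewrite /path_prob /= big_ord_recl /= ffun_cons0 -/(chain_pos m _ 0) chain_pos0.
congr (_ * _); apply: eq_bigr => i _.
by rewrite ffun_consS -(chain_pos_cons m d s i) /bump leq0n add1n.
Qed.

Lemma path_prob_ge0 m n (s : {ffun 'I_n.-1 -> bool}) : 0 <= path_prob p m s.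
Proof. by apply: prodr_ge0 => i _; exact/ltW/(step_prob_gt0 _ (s i)). Qed.

Lemma sum_path_prob m n : \sum_(s : {ffun 'I_n.-1 -> bool}) path_prob p m s = 1.
Proof.
elim: n m => [|[|k] IH] m /=; last first.
- rewrite big_ffun_cons big_bool /=.
  under eq_bigr do rewrite path_prob_cons.
  under [X in _ + X]eq_bigr do rewrite path_prob_cons.
  by rewrite -!mulr_sumr !IH !mulr1 /step_prob addrC subrK.
all: under eq_bigr do rewrite /path_prob big_ord0.
all: by rewrite sumr_const card_ffun card_bool card_ord.
Qed.

Lemma prob_ball_ge0 m mu eps n : 0 <= prob_ball p m mu eps n.
Proof. by apply: sumr_ge0 => s _; case: ifP => // _; exact: path_prob_ge0. Qed.

Lemma prob_ball_le1 m mu eps n : prob_ball p m mu eps n <= 1.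
Proof.
rewrite -(sum_path_prob m n); apply: ler_sum => s _.
by case: ifP => // _; exact: path_prob_ge0.
Qed.

Lemma le_prob_ball m mu eps eps' n : eps <= eps' ->
  prob_ball p m mu eps n <= prob_ball p m mu eps' n.
Proof.
move=> ee'; apply: ler_sum => s _.
case: (asboolP (in_ball mu eps (emp R m s))) => [h|_].
  by rewrite asboolT //; exact: lt_le_trans ee'.
by case: ifP => // _; exact: path_prob_ge0.
Qed.

End chain.

Section empirical.
Variable R : realType.

Lemma zpartial_delta (z : int) (c : R) N : (absz z < N)%N ->
  zpartial (fun k => if z == k then c else 0) N = c.
Proof.
rewrite /zpartial big_split /=; case: z => a /= aN.
  rewrite [X in _ + X]big1 // addr0 (bigD1 (Ordinal aN)) //= eqxx big1 ?addr0 //.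
  by move=> i /eqP ia; case: eqP => // -[ai]; case: ia; exact: val_inj.
have aN' : (a < N)%N by exact: ltn_trans aN.
rewrite [X in X + _]big1 // add0r (bigD1 (Ordinal aN')) //= eqxx big1 ?addr0 //.
by move=> i /eqP ia; case: eqP => // -[ai]; case: ia; exact: val_inj.
Qed.

Lemma zint_emp m n (s : {ffun 'I_n.-1 -> bool}) f :
  zint (emp R m s) f = n%:R^-1 * \sum_(j < n) f (ZFin (chain_pos m s j)).
Proof.
pose F (j : 'I_n) := f (ZFin (chain_pos m s j)).
have empE k : emp R m s (ZFin k) * f (ZFin k) =
    n%:R^-1 * \sum_(j < n) (if chain_pos m s j == k then F j else 0).
  rewrite /= -mulrA; congr (_ * _).
  rewrite -sum1_card natr_sum mulr_suml big_mkcond /=; apply: eq_bigr => j _.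
  rewrite unfold_in /in_set asboolb.
  by case: eqP => [<-|_]; rewrite ?mul1r ?mul0r.
rewrite /zint /= !mul0r !add0r /zsum (funext empE); apply: lim_near_cst => //.
exists (\max_(j < n) absz (chain_pos m s j)).+1 => // N /= hN.
rewrite /zpartial /=; under eq_bigr do rewrite -mulrDr -big_split.
rewrite -mulr_sumr exchange_big /=; congr (_ * _); apply: eq_bigr => j _.
apply: zpartial_delta; apply: leq_ltn_trans hN.
exact: (@leq_bigmax _ (fun j : 'I_n => absz (chain_pos m s j)) j).
Qed.

Lemma dist_avg_cons (N x T : R) : 0 < N -> `|x| <= 1 -> `|T| <= N ->
  `|(N + 1)^-1 * (x + T) - N^-1 * T| <= 2 / (N + 1).
Proof.
move=> N0 x1 TN; have N10 : 0 < N + 1 by rewrite ltr_wpDr.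
have -> : (N + 1)^-1 * (x + T) - N^-1 * T = (x - T / N) / (N + 1).
  by field; rewrite !gt_eqF.
rewrite normrM normfV (gtr0_norm N10) ler_pM2r ?invr_gt0 //.
have : `|T / N| <= 1 by rewrite normrM normfV (gtr0_norm N0) ler_pdivrMr // mul1r.
by move: (ler_normB x (T / N)); lra.
Qed.

Lemma zint_emp_cons a k d (s : {ffun 'I_k -> bool}) f : lip1 f ->
  `|zint (@emp R a k.+2 (ffun_cons d s)) f - zint (@emp R (a + step d) k.+1 s) f|
    <= 2 / (k.+2)%:R.
Proof.
move=> [_ f1]; rewrite !zint_emp big_ord_recl /= -/(chain_pos a _ 0) chain_pos0.
under eq_bigr do rewrite /bump leq0n add1n chain_pos_cons.
rewrite mulrSr; apply: dist_avg_cons; [by rewrite ltr0n | exact: f1 |].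
apply: le_trans (ler_norm_sum _ _ _) _.
by apply: le_trans (ler_sum _ (fun j _ => f1 _)) _; rewrite sumr_const card_ord.
Qed.

Lemma lip1_cst0 : lip1 (fun _ : zbar => 0 : R).
Proof. by split => [h k|x]; rewrite ?subr0 normr0 // normr_ge0. Qed.

Lemma zdist_le_add (nu nu' mu : zbar -> R) (e : R) : 0 <= e ->
  (forall f, lip1 f -> `|zint nu f - zint nu' f| <= e) ->
  zdist nu mu <= zdist nu' mu + e.
Proof.
move=> e0 hnu; rewrite /zdist.
set S := [set zint nu f - zint mu f | f in @lip1 R].
set S' := [set zint nu' f - zint mu f | f in @lip1 R].
have le_shift f : lip1 f -> zint nu f - zint mu f <= zint nu' f - zint mu f + e.
  by move=> lf; have := hnu f lf; have := ler_norm (zint nu f - zint nu' f); lra.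
have [S'ub|S'unb] := pselect (has_ubound S').
  apply: ge_sup.
    by exists (zint nu (fun=> 0) - zint mu (fun=> 0)), (fun=> 0) => //; exact: lip1_cst0.
  move=> _ [f lf <-]; apply: le_trans (le_shift f lf) _; rewrite lerD2r.
  by apply: (ub_le_sup S'ub); exists f.
have Sunb : ~ has_ubound S.
  move=> [M SM]; apply: S'unb; exists (M + e) => _ [f lf <-].
  have := hnu f lf; rewrite distrC; have := ler_norm (zint nu' f - zint nu f).
  have : zint nu f - zint mu f <= M by apply: SM; exists f.
  lra.
(* [sup] of a set without upper bound is the junk value [0] on both sides. *)
by rewrite !sup_out ?add0r // => -[].
Qed.

End empirical.

Section rates.
Variable R : realType.
Variable p : int -> R.
Hypothesis hp : forall k, 0 < p k < 1.

Lemma prob_ball_step a d mu eps k :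
  step_prob p a d * prob_ball p (a + step d) mu eps k.+1 <=
  prob_ball p a mu (eps + 2 / (k.+2)%:R) k.+2.
Proof.
rewrite /prob_ball big_ffun_cons (bigD1 d) //= mulr_sumr; apply: ler_wpDr.
  apply: sumr_ge0 => d' _; apply: sumr_ge0 => s _.
  by case: ifP => // _; exact: path_prob_ge0.
apply: ler_sum => s _.
case: (asboolP (in_ball mu eps (@emp R (a + step d) k.+1 s))) => [ball_s|_]; last first.
  by rewrite mulr0; case: ifP => // _; exact: path_prob_ge0.
rewrite asboolT ?path_prob_cons // /in_ball.
apply: le_lt_trans
  (zdist_le_add (nu' := @emp R (a + step d) k.+1 s) (e := 2 / k.+2%:R) mu _ _) _.
- by rewrite divr_ge0 ?ler0n.
- by move=> f lf; exact: zint_emp_cons.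
- by rewrite ltrD2r.
Qed.

Local Open Scope ereal_scope.

Lemma le_lograte (P P' : R) n : (0 <= P <= P')%R -> lograte P n <= lograte P' n.
Proof.
case/andP=> P0 PP'; rewrite /lograte; case: ifPn => [Ppos|]; last by rewrite leNye.
rewrite (lt_le_trans Ppos PP') lee_fin ler_wpM2l ?invr_ge0 ?ler0n //.
by rewrite ler_ln ?posrE // (lt_le_trans Ppos PP').
Qed.

Lemma lograte_le_succ (q P P' : R) n : (0 < q)%R -> (P' <= 1)%R -> (q * P <= P')%R ->
  lograte P n.+1 <= (- ln q / n.+1%:R)%:E + lograte P' n.+2.
Proof.
move=> q0 P'1 qPP'; rewrite /lograte; case: ifPn => [P0|]; last by rewrite leNye.
have P'0 : (0 < P')%R by apply: lt_le_trans qPP'; rewrite mulr_gt0.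
rewrite P'0 -EFinD lee_fin.
have lnqP : (ln q + ln P <= ln P')%R by rewrite -lnM ?posrE // ler_ln ?posrE ?mulr_gt0.
have lnP'0 : (ln P' <= 0)%R by rewrite ln_le0.
have lnP'_succ : (n.+1%:R^-1 * ln P' <= n.+2%:R^-1 * ln P')%R.
  by rewrite ![(_ * ln P')%R]mulrC ler_wnM2l // lef_pV2 ?posrE ?ltr0n // ler_nat.
have lnP_le : (n.+1%:R^-1 * ln P <= n.+1%:R^-1 * (ln P' - ln q))%R.
  by rewrite ler_wpM2l ?invr_ge0 ?ler0n //; lra.
set c := (n.+1%:R^-1)%R in lnP_le lnP'_succ *; set c' := (n.+2%:R^-1)%R in lnP'_succ *.
lra.
Qed.

Definition ball_lograte m mu eps : (\bar R)^nat := fun n => lograte (prob_ball p m mu eps n) n.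

Lemma le_ball_lograte m mu eps eps' n : (eps <= eps')%R ->
  ball_lograte m mu eps n <= ball_lograte m mu eps' n.
Proof. by move=> ee'; apply: le_lograte; rewrite prob_ball_ge0 // le_prob_ball. Qed.

Lemma ball_lograte_step a d mu eps eps' (δ : R) : (eps < eps')%R -> (0 < δ)%R ->
  \forall n \near \oo, ball_lograte (a + step d) mu eps n <= δ%:E + ball_lograte a mu eps' n.+1.
Proof.
move=> ee' δ0; apply: near_inftyS; near=> k.
apply: le_trans (lograte_le_succ k (step_prob_gt0 hp a d) (prob_ball_le1 hp _ _ _ _)
  (prob_ball_step a d mu eps k)) _.
apply: leeD; first by rewrite lee_fin; near: k; exact: near_divSn_le.
apply: le_lograte; rewrite prob_ball_ge0 // le_prob_ball // -lerBrDl.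
apply: le_trans (_ : 2 / k.+1%:R <= _)%R.
  by rewrite ler_pM2l // lef_pV2 ?posrE ?ltr0n // ler_nat.
by near: k; apply: near_divSn_le; rewrite subr_gt0.
Unshelve. all: by end_near. Qed.

Lemma le_lim_ball_lograte_step (F : (\bar R)^nat -> \bar R) a d mu :
  (forall u v, (forall n, u n <= v n) -> F u <= F v) ->
  (forall u v, (forall δ : R, (0 < δ)%R -> \forall n \near \oo, u n <= δ%:E + v n.+1) ->
     F u <= F v) ->
  lim (F (ball_lograte (a + step d) mu eps) @[eps --> 0^'+]) <=
  lim (F (ball_lograte a mu eps) @[eps --> 0^'+]).
Proof.
move=> Fmono Fapprox.
apply: (@le_lim_at_right R 0 (fun eps => F (ball_lograte a mu eps))
  (fun eps => F (ball_lograte (a + step d) mu eps))) => x y _ xy.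
- by apply: Fmono => n; exact: le_ball_lograte.
- by apply: Fmono => n; exact: le_ball_lograte.
- by apply: Fapprox => δ δ0; exact: ball_lograte_step.
Qed.

Lemma le_bd_step a d mu :
  lower_bd p (a + step d) mu <= lower_bd p a mu /\
  upper_bd p (a + step d) mu <= upper_bd p a mu.
Proof.
split; [apply: (le_lim_ball_lograte_step (F := limn_einf)) |
        apply: (le_lim_ball_lograte_step (F := limn_esup))].
- by move=> u v uv; apply: le_limn_einf_near; exact: nearW.
- exact: le_limn_einf_approxS.
- by move=> u v uv; apply: le_limn_esup_near; exact: nearW.
- exact: le_limn_esup_approxS.
Qed.

Lemma bd_succ m mu :
  lower_bd p (m + 1) mu = lower_bd p m mu /\ upper_bd p (m + 1) mu = upper_bd p m mu.
Proof.
have [le_l le_u] := le_bd_step m true mu.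
have [ge_l ge_u] := le_bd_step (m + 1) false mu.
rewrite addrK in ge_l ge_u.
by split; apply: le_anti; apply/andP; split;
  [exact: le_l | exact: ge_l | exact: le_u | exact: ge_u].
Qed.

End rates.

Theorem lemma2p2 (R : realType) (p : int -> R) (pm pp : R)
  (hp : forall k, 0 < p k < 1)
  (hpm : 0 < pm < 1) (hpp : 0 < pp < 1)
  (cvg_pp : (fun n : nat => p (Posz n)) @ \oo --> pp)
  (cvg_pm : (fun n : nat => p (- Posz n)) @ \oo --> pm) :
  (forall mu : zbar -> R, is_prob mu ->
     (- rateI p pm pp mu <= lower_bd p 0 mu)%E /\
     (upper_bd p 0 mu <= - rateI p pm pp mu)%E) ->
  forall (m : int) (mu : zbar -> R), is_prob mu ->
     (- rateI p pm pp mu <= lower_bd p m mu)%E /\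
     (upper_bd p m mu <= - rateI p pm pp mu)%E.
Proof.
move=> ldp0 m mu mu_prob.
have lower_bdE : lower_bd p m mu = lower_bd p 0 mu :=
  eq_succ_int_const (f := fun m => lower_bd p m mu) (fun m => (bd_succ hp m mu).1) m.
have upper_bdE : upper_bd p m mu = upper_bd p 0 mu :=
  eq_succ_int_const (f := fun m => upper_bd p m mu) (fun m => (bd_succ hp m mu).2) m.
rewrite lower_bdE upper_bdE.
exact: ldp0 mu mu_prob.
Qed.
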